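(* Let $X$ be a Banach space and $f_k:X\to\mathbb{R}\cup\{+\infty\}$ $(k\in\mathbb{N}\cup\{0\})$ proper convex functions such that the set $C:=\operatorname{dom}f_0\cap\{x\in X: f_k(x)\le0\ \forall k\in\mathbb{N}\}$ is nonempty. Consider the problem (P): minimize $f_0(x)$ subject to $f_k(x)\le0$ $(k\in\mathbb{N})$, with optimal value $v(\mathrm{P})$, and the dual problems (D) and (D$_m$) defined in the context. Suppose $v(\mathrm{P})>-\infty$. Then for every $m=0,1,\ldots$, $$(\operatorname{cl}v)(0)\le v(\mathrm{D})\le v(\mathrm{D}_m)\le v(\mathrm{P}).$$ If, additionally, the Slater condition holds, i.e., there exists $x\in\operatorname{dom}f_0$ with $\sup_{k\in\mathbb{N}}f_k(x)<0$, then $v(\mathrm{P})=v(\mathrm{D})=v(\mathrm{D}_m)$ for every $m=0,1,\ldots$, and both (D) and (D$_m$) have solutions (the suprema defining them are attained). Moreover, in this case, if $\lambda=(\lambda_1,\lambda_2,\ldots)\in\ell^1_+$, $\lambda_\infty\in\mathbb{R}_+$ is a solution of (D), then $$\hat\lambda:=(\lambda_1,\ldots,\lambda_m,\lambda_{m+1}+\lambda_\infty+\alpha,\lambda_{m+2}+\lambda_\infty+\alpha,\ldots)$$ is a solution of (D$_m$), where $\alpha=0$ if $\lambda_\infty>0$ and $\alpha=1$ otherwise.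
   Context: Conventions: $0\cdot(+\infty)=+\infty$, $(+\infty)-(+\infty)=+\infty$, $\inf\emptyset=+\infty$. $\ell^1_+$ and $\ell^\infty_+$ are the sets of sequences in $\ell^1$, resp. $\ell^\infty$, with nonnegative entries; $\mathbb{R}_+=[0,+\infty)$. The value function is $v(\varepsilon):=\inf\{f_0(x): f_k(x)\le\varepsilon\ \forall k\in\mathbb{N}\}$ for $\varepsilon\in\mathbb{R}$, so $v(\mathrm{P})=v(0)$; $\operatorname{cl}v$ is its lower semicontinuous envelope (largest lower semicontinuous function majorized by $v$). Let $f_\infty(x):=\limsup_{k\to\infty}f_k(x)$ and $f_k^+:=\max\{f_k,0\}$. For $x\in X$, $\lambda\in\ell^1_+$, $\lambda_\infty\ge0$: $L(x,\lambda,\lambda_\infty):=f_0(x)+\overline{\sum_{k\in\mathbb{N}}}\lambda_kf_k(x)+\lambda_\infty f_\infty(x)$, where $\overline{\sum_{k\in\mathbb{N}}}\lambda_kf_k(x):=\limsup_{n\to\infty}\sum_{k=1}^n\lambda_kf_k(x)$. For $m\in\{0,1,\ldots\}$ and $\lambda\in\ell^\infty_+$: $L_m(x,\lambda):=f_0(x)+\sum_{k=1}^m\lambda_kf_k(x)+\sum_{k=m+1}^{\infty}\lambda_kf_k^+(x)$ (the first sum is $0$ when $m=0$). (D) is the problem $\sup_{\lambda\in\ell^1_+,\lambda_\infty\in\mathbb{R}_+}\inf_{x\in X}L(x,\lambda,\lambda_\infty)$ with value $v(\mathrm{D})$; (D$_m$) is $\sup_{\lambda\in\ell^\infty_+}\inf_{x\in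 X}L_m(x,\lambda)$ with value $v(\mathrm{D}_m)$. A solution of a dual problem is a point where its supremum is attained. *)

From HB Require Import structures.
From mathcomp Require Import all_boot all_order all_algebra.
From mathcomp Require Import all_classical all_reals all_analysis.
Set Implicit Arguments. Unset Strict Implicit. Unset Printing Implicit Defensive.
Import Order.TTheory GRing.Theory Num.Theory.
Import numFieldNormedType.Exports.
Local Open Scope classical_set_scope.
Local Open Scope ring_scope.
Local Open Scope ereal_scope.

Section Defs.
Context {R : realType} {X : normedModType R}.

Definition proper_fun (g : X -> \bar R) : Prop :=
  (forall x, g x != -oo) /\ (exists x, g x < +oo).

Definition convex_fun (g : X -> \bar R) : Prop :=
  forall (x y : X) (t : R), (0 < t < 1)%R ->
    g (t *: x + (1 - t) *: y)%R <= t%:E * g x + (1 - t)%:E * g y.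

(* multiplication of a nonnegative real by an extended real with the
   convention 0 * (+oo) = +oo (and 0 * (-oo) = 0) *)
Definition cmul (t : R) (a : \bar R) : \bar R :=
  if (t == 0%R) && (a == +oo) then +oo else t%:E * a.

(* addition with the convention (+oo) + (-oo) = +oo *)
Notation "a +' b" := (dual_adde a b) (at level 50, left associativity).

(* f k for k >= 1 are the constraints, f 0 is the objective *)
Variable f : nat -> X -> \bar R.

Definition vfun (eps : R) : \bar R :=
  ereal_inf [set f 0%N x | x in [set x | forall k, (0 < k)%N -> f k x <= eps%:E]].

Definition vP : \bar R := vfun 0.

Definition cl_vfun (eps : R) : \bar R :=
  ereal_sup [set g eps | g in
    [set g : R -> \bar R | lower_semicontinuous g /\ forall e, g e <= vfun e]].

Definition f_infty (x : X) : \bar R := limn_esup (fun k => f k x).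

Definition fplus (k : nat) (x : X) : \bar R := maxe (f k x) 0.

(* lambda is indexed by k >= 1; lambda 0 is irrelevant *)
Definition ell1_pos (lam : nat -> R) : Prop :=
  (forall k, (0 < k)%N -> (0 <= lam k)%R) /\
  \sum_(1 <= k <oo) (`|lam k|%R)%:E < +oo.

Definition ellinf_pos (lam : nat -> R) : Prop :=
  (forall k, (0 < k)%N -> (0 <= lam k)%R) /\
  exists M : R, forall k, (0 < k)%N -> (`|lam k| <= M)%R.

Definition psum (lam : nat -> R) (x : X) (n : nat) : \bar R :=
  \big[dual_adde/0]_(1 <= k < n.+1) cmul (lam k) (f k x).

Definition Lag (x : X) (lam : nat -> R) (linf : R) : \bar R :=
  f 0%N x +' limn_esup (psum lam x) +' cmul linf (f_infty x).

Definition Lag_m (m : nat) (x : X) (lam : nat -> R) : \bar R :=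
  f 0%N x +' (\big[dual_adde/0]_(1 <= k < m.+1) cmul (lam k) (f k x))
          +' \sum_(m.+1 <= k <oo) cmul (lam k) (fplus k x).

Definition dualD_obj (lam : nat -> R) (linf : R) : \bar R :=
  ereal_inf [set Lag x lam linf | x in setT].

Definition dualDm_obj (m : nat) (lam : nat -> R) : \bar R :=
  ereal_inf [set Lag_m m x lam | x in setT].

Definition vD : \bar R :=
  ereal_sup [set dualD_obj p.1 p.2 | p in
    [set p : (nat -> R) * R | ell1_pos p.1 /\ (0 <= p.2)%R]].

Definition vDm (m : nat) : \bar R :=
  ereal_sup [set dualDm_obj m lam | lam in [set lam | ellinf_pos lam]].

Definition solD (lam : nat -> R) (linf : R) : Prop :=
  ell1_pos lam /\ (0 <= linf)%R /\ dualD_obj lam linf = vD.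

Definition solDm (m : nat) (lam : nat -> R) : Prop :=
  ellinf_pos lam /\ dualDm_obj m lam = vDm m.

Definition slater : Prop :=
  exists x, f 0%N x < +oo /\
    ereal_sup [set f k x | k in [set k | (0 < k)%N]] < 0.

End Defs.

Definition lam_hat {R : realType} (lam : nat -> R) (linf : R) (m : nat) : nat -> R :=
  fun k => if (k <= m)%N then lam k
           else (lam k + linf + (if (0 < linf)%R then 0 else 1))%R.

(* Weak duality is pointwise: L(x, lam, lam_infty) <= L_m(x, hat lam) because every
   tail weight of hat lam exceeds lam_infty, so the series of weighted positive parts
   pays for lam_infty * limsup f_k; and L_m <= f_0 on the feasible set.
   For the lower bound fix eps with v(eps) finite and x0 with f_k(x0) <= eps - delta.
   For each n, the Fan-Glicksberg-Hoffman alternative applied to f_0 - v(eps),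
   f_1 - eps, ..., f_n - eps and sup_{k>n} f_k - eps gives multipliers normalised on
   the objective, whose total mass is at most (f_0(x0) - v(eps)) / delta because of x0.
   A cluster point lam of these multipliers satisfies all truncated inequalities; the
   mass lost in the limit is lam_infty, and letting the truncation index go to infinity
   gives L(., lam, lam_infty) >= v(eps) + eps * lam_0. Lower semicontinuity of cl v
   turns this into cl v(0) <= v(D); under Slater one takes eps = 0, which produces a
   dual solution and closes the chain of inequalities. *)

From HB Require Import structures.
From mathcomp Require Import all_boot all_order all_algebra.
From mathcomp Require Import all_classical all_reals all_analysis.
From mathcomp Require Import ring lra.
Import Order.TTheory GRing.Theory Num.Theory.
Import numFieldNormedType.Exports.
Local Open Scope classical_set_scope.
Local Open Scope ring_scope.
Section ConvexAlternative.
Variables (R : realType) (X : lmodType R).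

Definition conv_closed (D : set X) :=
  forall x y (t : R), D x -> D y -> 0 < t < 1 -> D (t *: x + (1 - t) *: y).

Definition convex_on (D : set X) (g : X -> R) :=
  forall x y (t : R), D x -> D y -> 0 < t < 1 ->
    g (t *: x + (1 - t) *: y) <= t * g x + (1 - t) * g y.

Lemma convex_onBr (D : set X) (g : X -> R) (c : R) :
  convex_on D g -> convex_on D (fun x => g x - c).
Proof.
move=> cg x y t Dx Dy t01; have := cg x y t Dx Dy t01.
suff -> : t * (g x - c) + (1 - t) * (g y - c) = t * g x + (1 - t) * g y - c by lra.
by ring.
Qed.

Lemma convex_onS (D D' : set X) (g : X -> R) :
  D' `<=` D -> convex_on D g -> convex_on D' g.
Proof. by move=> sD cg x y t D'x D'y; apply: cg; apply: sD. Qed.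

Lemma convex_on_sum (D : set X) (G : nat -> X -> R) (c : nat -> R) (n : nat) :
  (forall i, (i < n)%N -> convex_on D (G i)) -> (forall i, 0 <= c i) ->
  convex_on D (fun x => \sum_(0 <= i < n) c i * G i x).
Proof.
move=> cG c0 x y t Dx Dy t01.
have -> : t * (\sum_(0 <= i < n) c i * G i x) + (1 - t) * (\sum_(0 <= i < n) c i * G i y)
    = \sum_(0 <= i < n) c i * (t * G i x + (1 - t) * G i y).
  by rewrite !mulr_sumr -big_split /=; apply: eq_bigr => i _; ring.
apply: ler_sum_nat => i /andP[_ ilt].
by apply: ler_wpM2l => //; apply: cG.
Qed.

Lemma convex_comb_lt0 (a b : R) : b < 0 -> exists2 s, 0 < s < 1 & (1 - s) * a + s * b < 0.
Proof.
move=> b0; set p := Num.max a 0.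
have p0 : 0 <= p by rewrite le_max lexx orbT.
have ap : a <= p by rewrite le_max lexx.
have d0 : 0 < 1 + p - b by lra.
exists ((1 + p) / (1 + p - b)).
  by apply/andP; split; [apply: divr_gt0; lra | rewrite ltr_pdivrMr // mul1r; lra].
have -> : 1 - (1 + p) / (1 + p - b) = - b / (1 + p - b) by field; rewrite gt_eqF.
have : - b / (1 + p - b) * a <= - b / (1 + p - b) * p.
  by apply: ler_wpM2l => //; rewrite divr_ge0 //; lra.
suff e : - b / (1 + p - b) * p + (1 + p) / (1 + p - b) * b = b / (1 + p - b).
  have : b / (1 + p - b) < 0 by rewrite pmulr_llt0 ?invr_gt0.
  lra.
by field; rewrite gt_eqF.
Qed.

Section TwoFunctions.
Variables (D : set X) (h g : X -> R).
Hypotheses (cD : conv_closed D) (ch : convex_on D h) (cg : convex_on D g).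
Hypothesis no_common_neg : ~ (exists x, D x /\ h x < 0 /\ g x < 0).

(* Otherwise stop slightly before the zero of the affine interpolation of g
   on the segment from y to x: there both h and g are negative. *)
Lemma cross_comb_ge0 x y : D x -> D y -> 0 <= g x -> g y < 0 ->
  0 <= - g y * h x + g x * h y.
Proof.
move=> Dx Dy gx0 gy0; rewrite leNgt; apply/negP => Sneg.
set d := g x - g y; have d0 : 0 < d by rewrite /d; lra.
set ts := - g y / d.
have ts0 : 0 < ts by rewrite divr_gt0 //; lra.
have ts1 : ts <= 1 by rewrite ler_pdivrMr // mul1r /d; lra.
have Sd : (- g y * h x + g x * h y) / d < 0 by rewrite pmulr_llt0 ?invr_gt0.
have [s /andP[s0 s1] hs] := convex_comb_lt0 (h y) _ Sd.
have t01 : 0 < s * ts < 1.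
  by rewrite mulr_gt0 //=; apply: le_lt_trans s1; rewrite ler_piMr // ltW.
apply: no_common_neg; exists ((s * ts) *: x + (1 - s * ts) *: y).
split; first exact: cD.
split.
- apply: le_lt_trans (ch _ _ _ Dx Dy t01) _.
  suff -> : s * ts * h x + (1 - s * ts) * h y
      = (1 - s) * h y + s * ((- g y * h x + g x * h y) / d) by [].
  by rewrite /ts /d; field; rewrite gt_eqF.
- apply: le_lt_trans (cg _ _ _ Dx Dy t01) _.
  have -> : s * ts * g x + (1 - s * ts) * g y = (1 - s) * g y.
    by rewrite /ts /d; field; rewrite gt_eqF.
  by rewrite pmulr_rlt0 // subr_gt0.
Qed.

Lemma convex_alternative2 : exists a b : R,
  [/\ 0 <= a, 0 <= b, 0 < a + b & forall x, D x -> 0 <= a * h x + b * g x].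
Proof.
have [[y0 [Dy0 gy0]]|nog] := pselect (exists y, D y /\ g y < 0); last first.
  exists 0, 1; split; rewrite ?add0r // => x Dx; rewrite mul0r add0r mul1r.
  by rewrite leNgt; apply/negP => gx0; apply: nog; exists x.
pose E := [set - h x / g x | x in D `&` [set x | 0 < g x]] `|` [set 0].
have ubE y : D y -> g y < 0 -> ubound E (h y / - g y).
  move=> Dy gy r; have ngy : 0 < - g y by lra.
  case=> [[x [Dx gx] <-]|->].
    rewrite ler_pdivrMr // mulrAC ler_pdivlMr //.
    by have := cross_comb_ge0 x y Dx Dy (ltW gx) gy; lra.
  apply: divr_ge0; last exact: ltW.
  by rewrite leNgt; apply/negP => hy; apply: no_common_neg; exists y.
have E0 : E 0 by right.
have supE : has_sup E by split; [exists 0 | exists (h y0 / - g y0); exact: ubE].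
exists 1, (sup E); split => //; first exact: sup_upper_bound.
  by rewrite ltr_pwDl // sup_upper_bound.
move=> x Dx; rewrite mul1r; case: (ltgtP (g x) 0) => gx.
- have := ge_sup (ex_intro _ 0 E0) (ubE x Dx gx).
  by rewrite ler_pdivlMr ?oppr_gt0 //; nra.
- have : - h x / g x <= sup E by apply: sup_upper_bound => //; left; exists x.
  by rewrite ler_pdivrMr //; nra.
- have gx0 : 0 <= g x by rewrite gx.
  have := cross_comb_ge0 x y0 Dx Dy0 gx0 gy0; rewrite gx mul0r addr0 => H.
  suff : 0 <= h x by rewrite mulr0 addr0.
  by rewrite -(pmulr_rge0 _ (_ : 0 < - g y0)) //; lra.
Qed.

End TwoFunctions.

Lemma convex_alternative (n : nat) (D : set X) (G : nat -> X -> R) :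
  conv_closed D -> (forall i, (i <= n)%N -> convex_on D (G i)) ->
  ~ (exists x, D x /\ forall i, (i <= n)%N -> G i x < 0) ->
  exists c : nat -> R, [/\ forall i, 0 <= c i, 0 < \sum_(0 <= i < n.+1) c i &
    forall x, D x -> 0 <= \sum_(0 <= i < n.+1) c i * G i x].
Proof.
elim: n D => [|n IH] D cD cG nex.
  exists (fun i => (i == 0%N)%:R); split => [i||x Dx]; rewrite ?big_nat1 ?mul1r //.
  rewrite leNgt; apply/negP => Gx; apply: nex; exists x; split => // i.
  by rewrite leqn0 => /eqP ->.
pose D' := D `&` [set x | G n.+1 x < 0].
have cD' : conv_closed D'.
  move=> x y t [Dx gx] [Dy gy] /[dup] t01 /andP[t0 t1]; split; first exact: cD.
  apply: le_lt_trans (cG n.+1 (leqnn _) _ _ _ Dx Dy t01) _.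
  have : t * G n.+1 x < 0 by rewrite pmulr_rlt0.
  have : (1 - t) * G n.+1 y < 0 by rewrite pmulr_rlt0 // subr_gt0.
  lra.
have [c' [c'0 c'pos c'D']] : exists c : nat -> R, [/\ forall i, 0 <= c i,
    0 < \sum_(0 <= i < n.+1) c i &
    forall x, D' x -> 0 <= \sum_(0 <= i < n.+1) c i * G i x].
  apply: IH => [//|i le_in|[x [[Dx gx] hx]]].
    exact: convex_onS (@subIsetl _ D _) (cG i (leqW le_in)).
  apply: nex; exists x; split => // i; rewrite leq_eqVlt ltnS.
  by case/orP => [/eqP ->|]; [exact: gx|exact: hx].
pose h x := \sum_(0 <= i < n.+1) c' i * G i x.
have ch : convex_on D h.
  by apply: convex_on_sum => // i; rewrite ltnS => /leqW; exact: cG.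
have nex2 : ~ (exists x, D x /\ h x < 0 /\ G n.+1 x < 0).
  by move=> [x [Dx [hx gx]]]; have := c'D' x (conj Dx gx); rewrite -/(h x); lra.
have [a [b [a0 b0 ab0 abD]]] :=
  @convex_alternative2 D h (G n.+1) cD ch (cG n.+1 (leqnn _)) nex2.
exists (fun i => if i == n.+1 then b else a * c' i).
have sumE (F : nat -> R) :
    \sum_(0 <= i < n.+2) (if i == n.+1 then b else a * c' i) * F i
    = a * (\sum_(0 <= i < n.+1) c' i * F i) + b * F n.+1.
  rewrite big_nat_recr //= eqxx mulr_sumr addrC [RHS]addrC; congr (_ + _).
  by apply: eq_big_nat => i /andP[_ ilt]; rewrite ltn_eqF // mulrA.
split => [i|| x Dx]; last by rewrite sumE; exact: abD.
  by case: eqP => _ //; exact: mulr_ge0.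
under eq_bigr do rewrite -[if _ then _ else _]mulr1.
rewrite sumE mulr1; under eq_bigr do rewrite mulr1.
nra.
Qed.

End ConvexAlternative.
Arguments conv_closed {R X}.
Arguments convex_on {R X}.
Arguments convex_onBr {R X D g}.
Arguments convex_alternative {R X n D G}.

Section ProductCluster.
Variable R : realType.
Local Notation RN := (prod_topology (fun _ : nat => R)).

Lemma bounded_seq_cluster (B : R) (p : nat -> RN) :
  (forall n i, 0 <= p n i <= B) ->
  exists2 q : RN, (forall i, 0 <= q i <= B) &
    forall Q : set RN, closed Q -> (\forall n \near \oo, Q (p n)) -> Q q.
Proof.
move=> pB; pose box := [set g : RN | forall i, `[0, B]%classic (g i)].
have cbox : compact box.
  by apply: (@tychonoff nat (fun _ => R) (fun _ => `[0, B]%classic)) => i; exact: segment_compact.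
have pbox : (p @ \oo) box by exists 0%N => // n _ i /=; rewrite in_itv /=; exact: pB.
have [q [boxq clq]] := cbox (p @ \oo) (fmap_proper_filter _ _) pbox.
exists q => [i|Q cQ pQ]; first by have := boxq i; rewrite /= in_itv.
by apply: cQ => V nV; have [r [Qr Vr]] := clq Q V pQ nV; exists r.
Qed.

Lemma continuous_sum_coord (F : nat -> R -> R) (m n : nat) :
  (forall k, continuous (F k)) -> continuous (fun g : RN => \sum_(m <= k < n) F k (g k)).
Proof.
move=> cF; apply: continuous_big => [|k _]; first exact: add_continuous.
by move=> g; apply: continuous_comp; [exact: proj_continuous|exact: cF].
Qed.

Lemma continuous_wsum (w : nat -> R) (K : nat) :
  continuous (fun g : RN => \sum_(1 <= k < K.+1) g k * w k).
Proof.
by apply: (continuous_sum_coord (fun k r => r * w k)) => k; exact: mulrr_continuous.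
Qed.

Lemma continuous_head_subr_psum (K : nat) :
  continuous (fun g : RN => g 0%N - \sum_(1 <= k < K.+1) g k).
Proof.
have cP : continuous (fun g : RN => \sum_(1 <= k < K.+1) g k).
  by apply: (continuous_sum_coord (fun k r => r)) => k r.
by move=> g; exact: (continuousB (@proj_continuous _ _ 0%N g) (cP g)).
Qed.

Lemma continuous_tail_form (a b : R) (w : nat -> R) (K : nat) :
  continuous (fun g : RN =>
    a + \sum_(1 <= k < K.+1) g k * w k + (g 0%N - \sum_(1 <= k < K.+1) g k) * b).
Proof.
move=> g; have ca : {for g, continuous (fun=> a : R)} by exact: cst_continuous.
have cb : {for g, continuous (fun=> b : R)} by exact: cst_continuous.
exact: (continuousD (continuousD ca (continuous_wsum w K g))
                    (continuousM (continuous_head_subr_psum K g) cb)).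
Qed.

Lemma closed_ge0 (phi : RN -> R) : continuous phi -> closed [set g | 0 <= phi g].
Proof. by move=> cphi; exact: (preimage_closed (fun g _ => cphi g) (@closed_ge R 0)). Qed.

End ProductCluster.
Arguments bounded_seq_cluster {R}.
Arguments continuous_sum_coord {R}.
Arguments closed_ge0 {R}.
Arguments continuous_tail_form {R}.
Arguments continuous_head_subr_psum {R}.

Lemma convex_on_fine (R : realType) (X : normedModType R) (D : set X)
    (g : X -> \bar R) :
  (forall x, g x != -oo%E) -> convex_fun g -> (forall x, D x -> g x \is a fin_num) ->
  convex_on D (fun x => fine (g x)).
Proof.
move=> gNy cg gfin x y t Dx Dy t01; have := cg x y t t01.
have := gNy (t *: x + (1 - t) *: y); rewrite -(fineK (gfin _ Dx)) -(fineK (gfin _ Dy)).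
by case: (g _) => [r| |] //= _; rewrite -!EFinM -EFinD lee_fin.
Qed.
Arguments convex_on_fine {R X D g}.

Section Tails.
Variables (R : realType) (X : normedModType R) (f : nat -> X -> \bar R).
Hypothesis f_neqNy : forall k x, f k x != -oo%E.
Hypothesis f_convex : forall k, convex_fun (f k).

Definition tailsup (K : nat) (x : X) : \bar R :=
  ereal_sup [set f k x | k in [set k | (K < k)%N]].

Definition findom (x : X) := (f 0%N x < +oo)%E /\ (tailsup 0 x < +oo)%E.

Definition fr (k : nat) (x : X) : R := fine (f k x).
Definition tr (K : nat) (x : X) : R := fine (tailsup K x).

Lemma f_le_tailsup k K x : (K < k)%N -> (f k x <= tailsup K x)%E.
Proof. by move=> Kk; apply: ereal_sup_ubound; exists k. Qed.

Lemma tailsup_le K L x : (K <= L)%N -> (tailsup L x <= tailsup K x)%E.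
Proof.
move=> KL; apply: ereal_sup_le => _ [k /= Lk <-]; exists k => //=.
exact: leq_ltn_trans Lk.
Qed.

Lemma tailsup_gtNy K x : (-oo < tailsup K x)%E.
Proof. by apply: lt_le_trans (f_le_tailsup _ _ x (ltnSn K)); rewrite ltNye. Qed.

Lemma findom_fin_num k x : findom x -> f k x \is a fin_num.
Proof.
move=> [f0 t0]; rewrite fin_numE f_neqNy /=.
case: k => [|k]; first by rewrite lt_eqF.
by rewrite lt_eqF // (le_lt_trans (f_le_tailsup _ _ x (ltn0Sn k))).
Qed.

Lemma findom_tailsup_fin_num K x : findom x -> tailsup K x \is a fin_num.
Proof.
move=> [f0 t0]; rewrite fin_numE gt_eqF ?tailsup_gtNy //=.
by rewrite lt_eqF // (le_lt_trans (tailsup_le _ _ x (leq0n K))).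
Qed.

Lemma fr_le_tr k K x : findom x -> (K < k)%N -> fr k x <= tr K x.
Proof.
move=> dx Kk; apply: fine_le; rewrite ?findom_fin_num ?findom_tailsup_fin_num //.
exact: f_le_tailsup.
Qed.

Lemma tr_le K L x : findom x -> (K <= L)%N -> tr L x <= tr K x.
Proof.
by move=> dx KL; apply: fine_le; rewrite ?findom_tailsup_fin_num ?tailsup_le.
Qed.

Lemma tailsup_convex K : convex_fun (tailsup K).
Proof.
move=> x y t /[dup] t01 /andP[t0 t1]; apply: ge_ereal_sup => _ [k /= Kk <-].
apply: le_trans (f_convex _ _ _ _ t01) _.
apply: leeD; apply: lee_wpmul2l; rewrite ?lee_fin ?subr_ge0;
  by [apply: ltW | exact: f_le_tailsup].
Qed.

Lemma findom_conv_closed : conv_closed findom.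
Proof.
move=> x y t [fx tx] [fy ty] /[dup] t01 /andP[t0 t1].
have ltey_comb g : (g x < +oo -> g y < +oo -> t%:E * g x + (1 - t)%:E * g y < +oo)%E.
  by move=> gx gy; rewrite lte_add_pinfty // lte_mul_pinfty // ?lee_fin ?subr_ge0 ?ltW.
split; first exact: le_lt_trans (f_convex _ _ _ _ t01) (ltey_comb _ fx fy).
exact: le_lt_trans (tailsup_convex _ _ _ _ t01) (ltey_comb _ tx ty).
Qed.

End Tails.
Arguments tailsup {R X}.
Arguments findom {R X}.
Arguments fr {R X}.
Arguments tr {R X}.
Arguments f_le_tailsup {R X f k K x}.
Arguments tailsup_le {R X f K L x}.
Arguments tailsup_gtNy {R X f}.
Arguments findom_fin_num {R X f} f_neqNy k {x}.
Arguments findom_tailsup_fin_num {R X f} f_neqNy K {x}.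
Arguments fr_le_tr {R X f} f_neqNy {k K x}.
Arguments tr_le {R X f} f_neqNy {K L x}.
Arguments tailsup_convex {R X f} f_convex K.
Arguments findom_conv_closed {R X f} f_convex.


Lemma psum_le_supp (R : realType) (lam : nat -> R) (n K : nat) :
  (forall k, 0 <= lam k) -> (forall k, (n < k)%N -> lam k = 0) ->
  \sum_(1 <= k < K.+1) lam k <= \sum_(1 <= k < n.+1) lam k.
Proof.
move=> lam0 supp; case: (leqP K n) => [Kn|nK].
  rewrite (big_cat_nat (_ : (1 <= K.+1)%N) (_ : (K.+1 <= n.+1)%N)) //= lerDl.
  exact: sumr_ge0.
rewrite (big_cat_nat (_ : (1 <= n.+1)%N) (_ : (n.+1 <= K.+1)%N)) //=; last exact: ltnW.
rewrite [X in _ + X](_ : _ = 0) ?addr0 //.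
by apply: big1_seq => k /andP[_]; rewrite mem_index_iota => /andP[nk _]; exact: supp.
Qed.

Lemma le_psum (R : realType) (lam : nat -> R) (k : nat) :
  (forall k, 0 <= lam k) -> (0 < k)%N -> lam k <= \sum_(1 <= i < k.+1) lam i.
Proof. by move=> lam0 k0; rewrite big_nat_recr //= lerDr sumr_ge0. Qed.

Arguments psum_le_supp {R lam} n K.
Arguments le_psum {R lam k}.

Section Multipliers.
Variables (R : realType) (X : normedModType R) (f : nat -> X -> \bar R).
Hypothesis f_neqNy : forall k x, f k x != -oo%E.
Hypothesis f_convex : forall k, convex_fun (f k).
Variables (V eps : R).

(* Lagrangian of the problem truncated after f_K, the constraints f_k, k > K,
   being lumped into their supremum; lam 0 is the total multiplier mass. *)
Definition tail_lagr (c0 : R) (lam : nat -> R) (x : X) (K : nat) : R :=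
  c0 * (fr f 0 x - V) + \sum_(1 <= k < K.+1) lam k * (fr f k x - eps)
  + (lam 0%N - \sum_(1 <= k < K.+1) lam k) * (tr f K x - eps).

Lemma tail_lagr_le c0 lam x K n : findom f x -> (K <= n)%N -> (forall k, 0 <= lam k) ->
  \sum_(1 <= k < n.+1) lam k <= lam 0%N -> tail_lagr c0 lam x n <= tail_lagr c0 lam x K.
Proof.
move=> dx Kn lam0 lam_le; rewrite /tail_lagr -!addrA lerD2l.
move: lam_le; rewrite !(big_cat_nat (_ : (1 <= K.+1)%N) (_ : (K.+1 <= n.+1)%N)) //=.
set P := \sum_(1 <= k < K.+1) lam k; set Q := \sum_(K.+1 <= k < n.+1) lam k => lam_le.
set B := \sum_(K.+1 <= k < n.+1) _.
have BQ : B <= Q * (tr f K x - eps).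
  rewrite mulr_suml; apply: ler_sum_nat => k /andP[Kk _]; apply: ler_wpM2l => //.
  by rewrite lerD2r fr_le_tr.
have : (lam 0%N - (P + Q)) * (tr f n x - eps) <= (lam 0%N - (P + Q)) * (tr f K x - eps).
  by apply: ler_wpM2l; [lra|rewrite lerD2r tr_le].
lra.
Qed.

Lemma tail_lagr_scale c0 lam x K c : c != 0 ->
  tail_lagr (c0 / c) (fun k => lam k / c) x K = tail_lagr c0 lam x K / c.
Proof.
move=> c_neq0; rewrite /tail_lagr -mulr_suml.
under eq_bigr do rewrite mulrAC.
by rewrite -mulr_suml; field.
Qed.

Lemma continuous_tail_lagr x K :
  continuous (fun lam : prod_topology (fun _ : nat => R) => tail_lagr 1 lam x K).
Proof.
exact: (continuous_tail_form (1 * (fr f 0 x - V)) (tr f K x - eps) (fun k => fr f k x - eps)).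
Qed.

Hypothesis V_le : forall x, findom f x ->
  (forall k, (0 < k)%N -> (f k x <= eps%:E)%E) -> V <= fr f 0 x.

Definition trunc_constr (n i : nat) (x : X) : R :=
  if i == 0%N then fr f 0 x - V else if (i <= n)%N then fr f i x - eps else tr f n x - eps.

Lemma trunc_constr_convex n i : convex_on (findom f) (trunc_constr n i).
Proof.
have cfr k : convex_on (findom f) (fr f k).
  exact: convex_on_fine (f_neqNy k) (f_convex k) (fun x dx => findom_fin_num f_neqNy k dx).
have ctr : convex_on (findom f) (tr f n).
  apply: (convex_on_fine _ (tailsup_convex f_convex n)) => [x|x dx].
    by rewrite gt_eqF // tailsup_gtNy.
  by have := findom_tailsup_fin_num f_neqNy n dx.
rewrite /trunc_constr; case: (i =P 0%N) => _; first exact: convex_onBr.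
by case: (leqP i n) => _; apply: convex_onBr.
Qed.

Lemma trunc_constr_infeasible n :
  ~ (exists x, findom f x /\ forall i, (i <= n.+1)%N -> trunc_constr n i x < 0).
Proof.
move=> [x [dx Gx]]; have := Gx 0%N isT; rewrite /trunc_constr eqxx; apply/negP.
rewrite -leNgt subr_ge0; apply: V_le => // k k0.
case: (leqP k n) => kn.
  have := Gx k (leqW kn); rewrite /trunc_constr (gtn_eqF k0) kn => fk.
  by rewrite -(fineK (findom_fin_num f_neqNy k dx)) lee_fin -/(fr f k x); lra.
have := Gx n.+1 (leqnn _); rewrite /trunc_constr /= ltnn => tn.
apply: le_trans (f_le_tailsup kn) _.
by rewrite -(fineK (findom_tailsup_fin_num f_neqNy n dx)) lee_fin -/(tr f n x); lra.
Qed.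

Lemma truncated_alternative n : exists c0 (mu : nat -> R),
  [/\ 0 <= c0 /\ 0 < c0 + mu 0%N, forall k, 0 <= mu k,
      forall k, (n < k)%N -> mu k = 0, \sum_(1 <= k < n.+1) mu k <= mu 0%N &
      forall x, findom f x -> 0 <= tail_lagr c0 mu x n].
Proof.
have [c [c_ge0 c_pos cG_ge0]] := convex_alternative (findom_conv_closed f_convex)
  (fun i _ => trunc_constr_convex n i) (@trunc_constr_infeasible n).
pose mu k := if k == 0%N then \sum_(1 <= i < n.+2) c i else if (k <= n)%N then c k else 0.
have mu0E : mu 0%N = \sum_(1 <= k < n.+1) c k + c n.+1 by rewrite /mu eqxx big_nat_recr.
have muE (F : nat -> R) :
    \sum_(1 <= k < n.+1) mu k * F k = \sum_(1 <= k < n.+1) c k * F k.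
  by apply: eq_big_nat => k /andP[k0 kn]; rewrite /mu (gtn_eqF k0) -ltnS kn.
have sumE : \sum_(1 <= k < n.+1) mu k = \sum_(1 <= k < n.+1) c k.
  by apply: eq_big_nat => k /andP[k0 kn]; rewrite /mu (gtn_eqF k0) -ltnS kn.
exists (c 0%N), mu; split => //.
- by split => //; rewrite /mu eqxx -big_ltn.
- by move=> k; rewrite /mu; case: eqP => _; [exact: sumr_ge0|case: ifP].
- by move=> k nk; rewrite /mu gtn_eqF ?(leq_ltn_trans (leq0n n) nk) // leqNgt nk.
- by rewrite sumE mu0E lerDl.
move=> x dx; have := cG_ge0 x dx.
rewrite big_ltn // big_nat_recr //= /tail_lagr muE sumE mu0E /trunc_constr eqxx /= ltnn.
set A := \sum_(1 <= k < n.+1) c k * _; set B := \sum_(1 <= k < n.+1) c k * _.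
rewrite [_ + c n.+1]addrC addrK.
suff -> : A = B by lra.
by apply: eq_big_nat => k /andP[k0 kn]; rewrite (gtn_eqF k0) -ltnS kn.
Qed.

Variables (xb : X) (delta : R).
Hypotheses (delta_gt0 : 0 < delta) (f0xb : (f 0%N xb < +oo)%E)
  (fxb : forall k, (0 < k)%N -> (f k xb <= (eps - delta)%:E)%E).

Lemma slater_findom : findom f xb.
Proof.
split => //; apply: le_lt_trans (ltry (eps - delta)).
by apply: ge_ereal_sup => _ [k /= k0 <-]; exact: fxb.
Qed.

Lemma tail_lagr_slater c0 mu n : (forall k, 0 <= mu k) ->
  \sum_(1 <= k < n.+1) mu k <= mu 0%N ->
  tail_lagr c0 mu xb n <= c0 * (fr f 0 xb - V) - delta * mu 0%N.
Proof.
move=> mu_ge0 mu_sum.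
have frb k : (0 < k)%N -> fr f k xb - eps <= - delta.
  move=> k0; have := fxb k k0.
  by rewrite -(fineK (findom_fin_num f_neqNy k slater_findom)) lee_fin -/(fr f k xb); lra.
have trb : tr f n xb - eps <= - delta.
  have : (tailsup f n xb <= (eps - delta)%:E)%E.
    by apply: ge_ereal_sup => _ [k /= nk <-]; apply: fxb; exact: leq_ltn_trans nk.
  rewrite -(fineK (findom_tailsup_fin_num f_neqNy n slater_findom)) lee_fin -/(tr f n xb).
  lra.
have hsum : \sum_(1 <= k < n.+1) mu k * (fr f k xb - eps)
    <= (\sum_(1 <= k < n.+1) mu k) * - delta.
  by rewrite mulr_suml; apply: ler_sum_nat => k /andP[k0 _]; apply: ler_wpM2l => //; exact: frb.
have : (mu 0%N - \sum_(1 <= k < n.+1) mu k) * (tr f n xb - eps)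
    <= (mu 0%N - \sum_(1 <= k < n.+1) mu k) * - delta.
  by apply: ler_wpM2l => //; rewrite subr_ge0.
rewrite /tail_lagr; lra.
Qed.

Lemma truncated_multipliers n : exists lam : nat -> R,
  [/\ forall k, 0 <= lam k, forall k, (n < k)%N -> lam k = 0,
      \sum_(1 <= k < n.+1) lam k <= lam 0%N, lam 0%N <= (fr f 0 xb - V) / delta &
      forall x, findom f x -> forall K, (K <= n)%N -> 0 <= tail_lagr 1 lam x K].
Proof.
have [c0 [mu [[c0_ge0 c0mu] mu_ge0 mu_supp mu_sum mu_lagr]]] := truncated_alternative n.
have slater := le_trans (mu_lagr xb slater_findom) (tail_lagr_slater c0 _ _ mu_ge0 mu_sum).
have c0_gt0 : 0 < c0.
  rewrite lt_neqAle c0_ge0 andbT; apply/eqP => c00.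
  move: slater c0mu; rewrite -c00 mul0r add0r => slater mu0.
  by have := mulr_gt0 delta_gt0 mu0; lra.
have lam_ge0 k : 0 <= mu k / c0 by rewrite divr_ge0 // ltW.
have lam_sum : \sum_(1 <= k < n.+1) mu k / c0 <= mu 0%N / c0.
  by rewrite -mulr_suml ler_pM2r ?invr_gt0.
exists (fun k => mu k / c0); split => //.
- by move=> k nk; rewrite mu_supp ?mul0r.
- by rewrite ler_pdivrMr // mulrAC ler_pdivlMr //; lra.
move=> x dx K Kn.
apply: le_trans (tail_lagr_le 1 (fun k => mu k / c0) x K n dx Kn lam_ge0 lam_sum).
rewrite -(divff (lt0r_neq0 c0_gt0)) tail_lagr_scale ?lt0r_neq0 //.
by rewrite divr_ge0 ?mu_lagr // ltW.
Qed.

(* The truncated multipliers lie in a fixed box, so they cluster (Tychonoff), and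
   the inequalities they satisfy are closed conditions in the product topology. *)
Lemma limit_multipliers : exists lam : nat -> R,
  [/\ forall k, 0 <= lam k, forall K, \sum_(1 <= k < K.+1) lam k <= lam 0%N &
      forall x, findom f x -> forall K, 0 <= tail_lagr 1 lam x K].
Proof.
have /choice [p pP] := truncated_multipliers.
have p_sum n K : \sum_(1 <= k < K.+1) p n k <= p n 0%N.
  have [p_ge0 p_supp p_sum _ _] := pP n.
  exact: le_trans (psum_le_supp n K p_ge0 p_supp) p_sum.
have pB n i : 0 <= p n i <= (fr f 0 xb - V) / delta.
  have [p_ge0 _ _ p0B _] := pP n; rewrite p_ge0 /=; apply: le_trans p0B.
  case: i => [//|i]; exact: le_trans (le_psum p_ge0 (ltn0Sn i)) (p_sum n i.+1).
have [q qB qcl] := bounded_seq_cluster _ p pB.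
exists q; split.
- by move=> i; have /andP[] := qB i.
- move=> K; rewrite -subr_ge0.
  apply: (qcl _ (closed_ge0 _ (continuous_head_subr_psum K))).
  by apply: nearW => n /=; rewrite subr_ge0.
- move=> x dx K; apply: (qcl _ (closed_ge0 _ (continuous_tail_lagr x K))).
  near=> n; have [p_ge0 _ p_le _ p_lagr] := pP n; apply: p_lagr => //.
  by near: n; exact: nbhs_infty_ge.
Unshelve. all: by end_near.
Qed.

End Multipliers.
Arguments tail_lagr {R X}.

Arguments limit_multipliers {R X f} f_neqNy f_convex {V eps} V_le {xb delta}.

Section LimsupTails.
Variable R : realType.
Implicit Types u : nat -> \bar R.
Local Open Scope ereal_scope.

Lemma limn_esupE u : limn_esup u = ereal_inf (range (esups u)).
Proof. by rewrite limn_esup_lim; apply/cvg_lim => //; exact: cvg_esups_inf. Qed.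

Lemma limn_esup_le_esups u N : limn_esup u <= esups u N.
Proof. by rewrite limn_esupE; apply: ereal_inf_lbound; exists N. Qed.

Lemma le_limn_esup u b : (forall N, b <= esups u N) -> b <= limn_esup u.
Proof. by move=> h; rewrite limn_esupE; apply: le_ereal_inf_tmp => _ [N _ <-]. Qed.

Lemma le_limn_esup_frequently u b :
  (forall N, exists2 k, (N <= k)%N & b <= u k) -> b <= limn_esup u.
Proof.
move=> h; apply: le_limn_esup => N; have [k Nk bk] := h N.
by apply: le_trans bk _; apply: ereal_sup_ubound; exists k.
Qed.

Lemma limn_esup_lt u a : limn_esup u < a -> \forall N \near \oo, esups u N < a.
Proof.
rewrite limn_esupE => /ereal_inf_lt[_ [N _ <-] uNa].
exists N => // M NM; apply: le_lt_trans uNa; exact: nonincreasing_esups.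
Qed.

Lemma le_limn_esup_EFin (a r : R) (s u : nat -> R) :
  (forall K, (a <= s K + u K)%R) ->
  (forall e, (0 < e)%R -> \forall K \near \oo, (u K <= r + e)%R) ->
  (a - r)%:E <= limn_esup (fun K => (s K)%:E).
Proof.
move=> asu uev; apply/lee_subgt0Pr => e e0; rewrite -EFinB.
apply: le_limn_esup_frequently => N; have [M _ hM] := uev e e0.
exists (maxn N M); first exact: leq_maxl.
by rewrite lee_fin; have := asu (maxn N M); have := hM _ (leq_maxr N M); lra.
Qed.

End LimsupTails.
Arguments limn_esup_le_esups {R}.
Arguments le_limn_esup {R}.
Arguments le_limn_esup_frequently {R}.
Arguments limn_esup_lt {R}.
Arguments le_limn_esup_EFin {R}.

Section CMul.
Variable R : realType.
Local Open Scope ereal_scope.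

Lemma cmul_pinfty (t : R) : (0 <= t)%R -> cmul t +oo = +oo.
Proof.
rewrite /cmul eqxx andbT; case: eqP => // /eqP t_neq0 t_ge0.
by rewrite gt0_muley // lt_neqAle eq_sym t_neq0.
Qed.

Lemma cmul_EFin (t r : R) : cmul t r%:E = (t * r)%:E.
Proof. by rewrite /cmul andbF. Qed.

Lemma cmul0 (a : \bar R) : a != +oo -> cmul 0 a = 0.
Proof. by rewrite /cmul eqxx => /negbTE ->; rewrite mul0e. Qed.

Lemma cmul_gt0 (t : R) (a : \bar R) : (0 < t)%R -> cmul t a = t%:E * a.
Proof. by move=> t0; rewrite /cmul gt_eqF. Qed.

Lemma cmul_ge0 (t : R) (a : \bar R) : (0 <= t)%R -> 0 <= a -> 0 <= cmul t a.
Proof. by move=> t0 a0; rewrite /cmul; case: ifP => // _; exact: mule_ge0. Qed.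

End CMul.

Import DualAddTheory.

Section TailLimits.
Variables (R : realType) (X : normedModType R) (f : nat -> X -> \bar R).
Hypothesis f_neqNy : forall k x, f k x != -oo%E.
Local Open Scope ereal_scope.

Lemma f_infty_le_tailsup K x : f_infty f x <= tailsup f K x.
Proof. exact: (limn_esup_le_esups _ K.+1). Qed.

Lemma f_infty_pinfty x : (forall N, tailsup f N x = +oo) -> f_infty f x = +oo.
Proof.
move=> tly; apply/eqP; rewrite eq_le leey /=; apply: le_limn_esup => N.
by rewrite -(tly N) -[tailsup f N x]/(esups _ N.+1); exact: nonincreasing_esups.
Qed.

Lemma f_infty_lt_tr x (a : R) : findom f x -> f_infty f x < a%:E ->
  \forall K \near \oo, (tr f K x < a)%R.
Proof.
move=> dx /limn_esup_lt [N _ hN]; exists N => // K NK.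
rewrite -lte_fin /tr fineK ?(findom_tailsup_fin_num f_neqNy K dx) //.
exact: (hN K.+1 (leqW NK)).
Qed.

Lemma tailsup_le_max N x : tailsup f N x <= maxe (f N.+1 x) (tailsup f N.+1 x).
Proof.
apply: ge_ereal_sup => _ [k /= Nk <-]; rewrite le_max.
move: Nk; rewrite leq_eqVlt => /orP[/eqP <-|Nk]; first by rewrite lexx.
by rewrite f_le_tailsup ?orbT.
Qed.

Lemma not_findom x : ~ findom f x ->
  [\/ f 0%N x = +oo, exists2 k, (0 < k)%N & f k x = +oo | forall N, tailsup f N x = +oo].
Proof.
move=> ndx; have [f0y|f0] := eqVneq (f 0%N x) +oo; first exact: Or31.
have [[k k0 fky]|fin] := pselect (exists2 k, (0 < k)%N & f k x = +oo).
  by apply: Or32; exists k.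
apply: Or33; elim => [|N IH].
  apply/eqP; rewrite eq_le leey /= leNgt; apply/negP => t0.
  by apply: ndx; split => //; rewrite ltey.
apply/eqP; rewrite eq_le leey /= leNgt; apply/negP => tN.
have fN : f N.+1 x < +oo by rewrite ltey; apply/eqP => fy; apply: fin; exists N.+1.
have mlt : maxe (f N.+1 x) (tailsup f N.+1 x) < +oo by rewrite gt_max fN tN.
by move: (tailsup_le_max N x); rewrite IH leye_eq => /eqP mE; rewrite -mE ltxx in mlt.
Qed.

End TailLimits.
Arguments f_infty_le_tailsup {R X f}.
Arguments f_infty_lt_tr {R X f}.
Arguments not_findom {R X f}.

Lemma dual_adde_dE (R : realType) (x y : \bar R) : dual_adde x y = (x + y)%dE.
Proof. by []. Qed.

Section PartialSums.
Variables (R : realType) (X : normedModType R) (f : nat -> X -> \bar R).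
Hypothesis f_neqNy : forall k x, f k x != -oo%E.
Local Open Scope ereal_scope.

Lemma psum_recr lam x n :
  psum f lam x n.+1 = (psum f lam x n + cmul (lam n.+1) (f n.+1 x))%dE.
Proof. exact: (@big_nat_recr (\bar^d R) 0%R (@GRing.add (\bar^d R)) n.+1 1). Qed.

Lemma psum_EFin lam x n : findom f x ->
  psum f lam x n = (\sum_(1 <= k < n.+1) lam k * fr f k x)%:E.
Proof.
move=> dx; elim: n => [|n IH]; first by rewrite /psum !big_geq.
rewrite psum_recr IH -(fineK (findom_fin_num f_neqNy n.+1 dx)) cmul_EFin.
by rewrite -dEFinD -big_nat_recr.
Qed.

Lemma psum_pinfty lam x k n : (forall j, (0 < j)%N -> (0 <= lam j)%R) ->
  (0 < k)%N -> (k <= n)%N -> f k x = +oo -> psum f lam x n = +oo.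
Proof.
move=> lam_ge0 k0 kn fky; elim: n kn => [|n IH]; first by rewrite leqn0 => /eqP k00; move: k0; rewrite k00.
rewrite leq_eqVlt psum_recr => /orP[/eqP <-|].
  by rewrite fky cmul_pinfty ?lam_ge0 // daddey.
by rewrite ltnS => /IH ->; rewrite daddye.
Qed.

Lemma Lag_pinfty lam linf x : (forall k, (0 < k)%N -> (0 <= lam k)%R) -> (0 <= linf)%R ->
  ~ findom f x -> Lag f x lam linf = +oo.
Proof.
move=> lam_ge0 linf_ge0 /not_findom[f0y|[k k0 fky]|tly]; rewrite /Lag !dual_adde_dE.
- by rewrite f0y !daddye.
- suff -> : limn_esup (psum f lam x) = +oo by rewrite daddey daddye.
  apply/eqP; rewrite eq_le leey /=; apply: le_limn_esup_frequently => N.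
  exists (maxn N k); first exact: leq_maxl.
  by rewrite (psum_pinfty _ _ _ _ lam_ge0 k0 (leq_maxr N k) fky).
- by rewrite f_infty_pinfty // cmul_pinfty // daddey.
Qed.

End PartialSums.
Arguments psum_EFin {R X f}.
Arguments Lag_pinfty {R X f}.
Arguments psum_pinfty {R X f lam x k n}.

Lemma le_dual_adde3 (R : realType) (a b r : R) (L : \bar R) :
  ((a - b - r)%:E <= L)%E -> (a%:E <= dual_adde (dual_adde b%:E L) r%:E)%E.
Proof.
move=> aL; rewrite !dual_adde_dE; apply: le_trans (lee_dD (lee_dD (lexx b%:E) aL) (lexx r%:E)).
by rewrite -!dEFinD lee_fin; lra.
Qed.

Lemma ell1_pos_bounded_psum (R : realType) (lam : nat -> R) (M : R) :
  (forall k, 0 <= lam k) -> (forall K, \sum_(1 <= k < K.+1) lam k <= M) -> ell1_pos lam.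
Proof.
move=> lam_ge0 lam_le; split => [k _|]; first exact: lam_ge0.
apply: le_lt_trans (ltry M); apply: lime_le.
  by apply: is_cvg_ereal_nneg_natsum => n _; rewrite lee_fin.
apply: nearW => n; rewrite sumEFin lee_fin.
case: n => [|n]; first by rewrite big_geq //; have := lam_le 0%N; rewrite big_geq.
by under eq_bigr do rewrite ger0_norm //; exact: lam_le.
Qed.

(* The multiplier mass that escapes to infinity; it becomes the weight of f_infty. *)
Definition lam_infty {R : realType} (lam : nat -> R) : R :=
  lam 0%N - sup (range (fun K => \sum_(1 <= k < K.+1) lam k)).

Section LagrangianLowerBound.
Variables (R : realType) (X : normedModType R) (f : nat -> X -> \bar R).
Hypothesis f_neqNy : forall k x, f k x != -oo%E.
Variables (V eps : R) (lam : nat -> R).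
Hypotheses (lam_ge0 : forall k, 0 <= lam k)
  (lam_psum : forall K, \sum_(1 <= k < K.+1) lam k <= lam 0%N)
  (lam_lagr : forall x, findom f x -> forall K, 0 <= tail_lagr f V eps 1 lam x K).

Local Notation P K := (\sum_(1 <= k < K.+1) lam k).
Local Notation sP := (sup (range (fun K => P K))).

Lemma tail_lagr1E x K : tail_lagr f V eps 1 lam x K =
  fr f 0 x + \sum_(1 <= k < K.+1) lam k * fr f k x + (lam 0%N - P K) * tr f K x
  - (V + eps * lam 0%N).
Proof.
rewrite /tail_lagr mul1r; under eq_bigr do rewrite mulrBr.
by rewrite sumrB -mulr_suml; ring.
Qed.

Lemma psum_has_ubound : has_ubound (range (fun K => P K)).
Proof. by exists (lam 0%N) => _ [K _ <-]. Qed.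

Lemma psum_le_sup K : P K <= sP.
Proof. by apply: sup_upper_bound; [split; [exists (P K), K|exact: psum_has_ubound]|exists K]. Qed.

Lemma lam_infty_ge0 : 0 <= lam_infty lam.
Proof.
rewrite subr_ge0; apply: ge_sup; first by exists (P 0%N), 0%N.
by move=> _ [K _ <-].
Qed.

Lemma psum_sup_near e : 0 < e -> \forall K \near \oo, sP - P K <= e.
Proof.
move=> e0; have supP : has_sup (range (fun K => P K)).
  by split; [exists (P 0%N), 0%N | exact: psum_has_ubound].
have [_ [K0 _ <-] hK0] := sup_adherent e0 supP.
exists K0 => // K K0K.
have : P K0 <= P K.
  rewrite (big_cat_nat (_ : (1 <= K0.+1)%N) (_ : (K0.+1 <= K.+1)%N)) //= lerDl.
  exact: sumr_ge0.
lra.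
Qed.

Lemma tail_gap x K : findom f x ->
  V + eps * lam 0%N - fr f 0 x <= \sum_(1 <= k < K.+1) lam k * fr f k x
    + (lam_infty lam * tr f K x + (sP - P K) * Num.max (tr f 0 x) 0).
Proof.
move=> dx; set c := Num.max _ _.
have : (sP - P K) * tr f K x <= (sP - P K) * c.
  by rewrite ler_wpM2l ?subr_ge0 ?psum_le_sup // le_max (tr_le f_neqNy dx (leq0n K)).
have := lam_lagr x dx K; rewrite tail_lagr1E.
have -> : lam 0%N - P K = lam_infty lam + (sP - P K) by rewrite /lam_infty; ring.
rewrite mulrDl; lra.
Qed.

Lemma f_infty_gtNy x : findom f x -> 0 < lam_infty lam -> (-oo < f_infty f x)%E.
Proof.
move=> dx lgt0; rewrite ltNye; apply/eqP => phiNy.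
set c := Num.max (tr f 0 x) 0; set linf := lam_infty lam.
have c_ge0 : 0 <= c by rewrite le_max lexx orbT.
set M := (V + eps * lam 0%N - fr f 0 x - 2 * lam 0%N * c) / linf.
have /(f_infty_lt_tr f_neqNy _ _ dx) [N _ hN] : (f_infty f x < M%:E)%E by rewrite phiNy ltNye.
have trN : linf * tr f N x < linf * M by rewrite ltr_pM2l //; apply: hN => /=.
have hM : linf * M = V + eps * lam 0%N - fr f 0 x - 2 * lam 0%N * c.
  by rewrite /M mulrC divfK // gt_eqF.
have SN : \sum_(1 <= k < N.+1) lam k * fr f k x <= lam 0%N * c.
  apply: le_trans (_ : P N * c <= _); last exact: ler_wpM2r (lam_psum N).
  rewrite mulr_suml; apply: ler_sum_nat => k /andP[k0 _]; apply: ler_wpM2l => //.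
  by rewrite le_max (le_trans (fr_le_tr f_neqNy dx k0) (tr_le f_neqNy dx (leq0n 0))).
have dN : (sP - P N) * c <= lam 0%N * c.
  have PN0 : 0 <= P N by apply: sumr_ge0 => k _; exact: lam_ge0.
  have := lam_infty_ge0; rewrite /lam_infty subr_ge0 => sP_le.
  by apply: ler_wpM2r => //; lra.
by have := tail_gap x N dx; rewrite -/linf -/c; lra.
Qed.

Lemma Lag_ge_findom x : findom f x ->
  ((V + eps * lam 0%N)%:E <= Lag f x lam (lam_infty lam))%E.
Proof.
move=> dx; set linf := lam_infty lam; set c := Num.max (tr f 0 x) 0.
have c_ge0 : 0 <= c by rewrite le_max lexx orbT.
have dev e : 0 < e -> \forall K \near \oo, (sP - P K) * c <= e.
  move=> e0; near=> K.
  have : sP - P K <= e / (c + 1) by near: K; apply: psum_sup_near; rewrite divr_gt0 //; lra.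
  rewrite ler_pdivlMr; last lra.
  by have := psum_le_sup K; nra.
have phi_lt : (f_infty f x < +oo)%E := le_lt_trans (f_infty_le_tailsup 0%N x) dx.2.
have [r [cmE r_ev]] : exists r, cmul linf (f_infty f x) = r%:E /\
    forall e, 0 < e -> \forall K \near \oo, linf * tr f K x <= r + e.
  have [l0|lpos] := eqVneq linf 0.
    exists 0; rewrite l0 cmul0 ?lt_eqF //; split => // e e0.
    by apply: nearW => K; rewrite mul0r add0r ltW.
  have lgt0 : 0 < linf by rewrite lt_neqAle eq_sym lpos lam_infty_ge0.
  move: phi_lt (f_infty_gtNy x dx lgt0); case E : (f_infty f x) => [phi| |] // _ _.
  exists (linf * phi); rewrite cmul_EFin; split => // e e0.
  have : (f_infty f x < (phi + e / linf)%:E)%E by rewrite E lte_fin ltrDl divr_gt0.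
  move=> /(f_infty_lt_tr f_neqNy _ _ dx); apply: filterS => K /ltW trK.
  have := ler_wpM2l (ltW lgt0) trK.
  by rewrite mulrDr mulrCA divff ?mulr1 // gt_eqF.
rewrite /Lag -(fineK (findom_fin_num f_neqNy 0 dx)) cmE.
have -> : psum f lam x = (fun K => (\sum_(1 <= k < K.+1) lam k * fr f k x)%:E).
  by apply: funext => n; exact: psum_EFin.
apply: le_dual_adde3.
apply: (le_limn_esup_EFin _ _ _ (fun K => linf * tr f K x + (sP - P K) * c)) => [K|e e0].
  exact: tail_gap.
near=> K.
have h1 : linf * tr f K x <= r + e / 2 by near: K; apply: r_ev; rewrite divr_gt0.
have h2 : (sP - P K) * c <= e / 2 by near: K; apply: dev; rewrite divr_gt0.
lra.
Unshelve. all: by end_near.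
Qed.

Lemma Lag_ge x : ((V + eps * lam 0%N)%:E <= Lag f x lam (lam_infty lam))%E.
Proof.
have [dx|ndx] := pselect (findom f x); first exact: Lag_ge_findom.
by rewrite Lag_pinfty ?leey ?lam_infty_ge0 // => k _; exact: lam_ge0.
Qed.

End LagrangianLowerBound.
Arguments Lag_ge {R X f} f_neqNy {V eps lam}.
Arguments lam_infty_ge0 {R lam}.
Arguments ell1_pos_bounded_psum {R lam M}.

Lemma dual_adde_le3 (R : realType) (a b r : R) (L : \bar R) :
  (L <= (a - b - r)%:E)%E -> (dual_adde (dual_adde b%:E L) r%:E <= a%:E)%E.
Proof.
move=> La; rewrite !dual_adde_dE; apply: le_trans (lee_dD (lee_dD (lexx b%:E) La) (lexx r%:E)) _.
by rewrite -!dEFinD lee_fin; lra.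
Qed.

Section LagrangianComparison.
Variables (R : realType) (X : normedModType R) (f : nat -> X -> \bar R).
Hypothesis f_neqNy : forall k x, f k x != -oo%E.
Local Open Scope ereal_scope.

Lemma fplus_ge0 k x : 0 <= fplus f k x.
Proof. by rewrite /fplus le_max lexx orbT. Qed.

Lemma fplus_EFin k x : f k x \is a fin_num ->
  fplus f k x = (Num.max (fine (f k x)) 0)%:E.
Proof. by move=> fk; rewrite /fplus -{1}(fineK fk) EFin_max. Qed.

Lemma Lag_m_le_f0 (lam : nat -> R) m x : (forall k, (0 < k)%N -> (0 <= lam k)%R) ->
  (forall k, (0 < k)%N -> f k x <= 0) -> Lag_m f m x lam <= f 0%N x.
Proof.
move=> lam_ge0 fx0; have [f0y|f0fin] := eqVneq (f 0%N x) +oo; first by rewrite f0y leey.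
have dx : findom f x.
  split; first by rewrite ltey.
  by apply: le_lt_trans (ltry 0); apply: ge_ereal_sup => _ [k /= k0 <-]; exact: fx0.
have fr_le0 k : (0 < k)%N -> (fr f k x <= 0)%R.
  by move=> k0; have := fx0 k k0; rewrite -(fineK (findom_fin_num f_neqNy k dx)) lee_fin.
rewrite /Lag_m eseries0 => [|k mk _]; last first.
  rewrite fplus_EFin ?(findom_fin_num f_neqNy k dx) // max_r ?cmul_EFin ?mulr0 //.
  exact: fr_le0 (leq_ltn_trans (leq0n m) mk).
rewrite -/(psum f lam x m) psum_EFin // -(fineK (findom_fin_num f_neqNy 0 dx)).
apply: dual_adde_le3; rewrite lee_fin subrr subr0 big_seq.
apply: sumr_le0 => k; rewrite mem_index_iota => /andP[k0 _].
by rewrite mulr_ge0_le0 ?lam_ge0 ?fr_le0.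
Qed.

Variables (lam : nat -> R) (linf : R) (m : nat).
Hypotheses (lam_ge0 : forall k, (0 < k)%N -> (0 <= lam k)%R) (linf_ge0 : (0 <= linf)%R).

Local Notation lamh := (lam_hat lam linf m).
Let beta : R := (linf + (if 0 < linf then 0 else 1))%R.

Let beta_gt0 : (0 < beta)%R.
Proof.
by rewrite /beta; case: (ltP 0%R linf) => h; [rewrite addr0|exact: ltr_wpDl linf_ge0 ltr01].
Qed.

Let linf_le_beta : (linf <= beta)%R.
Proof. by rewrite /beta; case: (ltP 0%R linf) => h; rewrite ?addr0 // lerDl ler01. Qed.

Let lamh_le k : (k <= m)%N -> lamh k = lam k.
Proof. by move=> km; rewrite /lam_hat km. Qed.

Let lamh_gt k : (m < k)%N -> lamh k = (lam k + beta)%R.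
Proof. by move=> mk; rewrite /lam_hat leqNgt mk /= addrA. Qed.

Let lamh_ge0 k : (0 < k)%N -> (0 <= lamh k)%R.
Proof.
move=> k0; case: (leqP k m) => km; first by rewrite lamh_le // lam_ge0.
by rewrite lamh_gt // addr_ge0 ?lam_ge0 // ltW.
Qed.

Local Notation term x k := (cmul (lamh k) (fplus f k x)).

Let term_ge0 x k : (m < k)%N -> 0 <= term x k.
Proof. by move=> mk; rewrite cmul_ge0 ?fplus_ge0 // lamh_ge0 // (leq_ltn_trans _ mk). Qed.

Let term_le_series x k : (m < k)%N -> term x k <= \sum_(m.+1 <= i <oo) term x i.
Proof.
move=> mk; apply: le_trans _ (@nneseries_lim_ge R (fun i => term x i) xpredT m.+1 k.+1
  (fun i mi _ => term_ge0 x i mi)).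
rewrite big_nat_recr //= leeDr //; rewrite big_seq; apply: sume_ge0 => i.
by rewrite mem_index_iota => /andP[mi _]; exact: term_ge0.
Qed.

Lemma Lag_m_pinfty x : ~ findom f x -> Lag_m f m x lamh = +oo.
Proof.
rewrite /Lag_m !dual_adde_dE; case/not_findom => [f0y|[k k0 fky]|tly].
- by rewrite f0y !daddye.
- case: (leqP k m) => km.
    by rewrite -/(psum f lamh x m) (psum_pinfty lamh_ge0 k0 km fky) daddey daddye.
  suff -> : \sum_(m.+1 <= i <oo) term x i = +oo by rewrite daddey.
  apply/eqP; rewrite eq_le leey /=; apply: le_trans _ (term_le_series x k km).
  by rewrite /fplus fky maxye cmul_pinfty // lamh_ge0.
- suff -> : \sum_(m.+1 <= i <oo) term x i = +oo by rewrite daddey.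
  apply/eqyP => M M0; have : (M / beta)%:E < tailsup f m x by rewrite tly ltry.
  move=> /ereal_sup_gt[_ [k /= mk <-] Mk]; apply: le_trans _ (term_le_series x k mk).
  have lamh_gt0 : (0 < lamh k)%R.
    by rewrite lamh_gt // ltr_wpDl // lam_ge0 // (leq_ltn_trans _ mk).
  have : (M / beta)%:E < fplus f k x by apply: lt_le_trans Mk _; rewrite /fplus le_max lexx.
  rewrite cmul_gt0 //; case: (fplus f k x) => [q| |] // Mq; last first.
    by rewrite gt0_muley ?leey ?lte_fin.
  rewrite -EFinM lee_fin; move: Mq; rewrite lte_fin ltr_pdivrMr // => Mq.
  have := lam_ge0 k (leq_ltn_trans (leq0n m) mk); rewrite lamh_gt //.
  have : (0 < q)%R by rewrite -(pmulr_lgt0 q beta_gt0) (lt_trans M0 Mq).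
  nra.
Qed.

Lemma psum_add_term_le x n j : findom f x -> (m <= n)%N -> (n < j)%N ->
  ((\sum_(1 <= k < n.+1) lam k * fr f k x + beta * Num.max (fr f j x) 0)%:E
   <= (\sum_(1 <= k < m.+1) lam k * fr f k x)%:E + \sum_(m.+1 <= i <oo) term x i).
Proof.
move=> dx mn nj; set p := fun k => Num.max (fr f k x) 0%R.
have p_ge0 k : (0 <= p k)%R by rewrite le_max lexx orbT.
have termE k : term x k = (lamh k * p k)%:E.
  by rewrite fplus_EFin ?(findom_fin_num f_neqNy k dx) // cmul_EFin.
apply: le_trans (leeD (lexx _) (@nneseries_lim_ge R (fun i => term x i) xpredT m.+1 j.+1
  (fun i mi _ => term_ge0 x i mi))).
rewrite (eq_bigr _ (fun k _ => termE k)) sumEFin -EFinD lee_fin.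
rewrite [X in (_ <= _ + X)%R]big_nat_recr ?(leq_trans _ nj) //=.
rewrite (big_cat_nat (_ : (m.+1 <= n.+1)%N) nj) //=.
rewrite (big_cat_nat (_ : (1 <= m.+1)%N) (_ : (m.+1 <= n.+1)%N)) //= -!addrA lerD2l.
have h1 : (\sum_(m.+1 <= k < n.+1) lam k * fr f k x <= \sum_(m.+1 <= k < n.+1) lamh k * p k)%R.
  apply: ler_sum_nat => k /andP[mk _]; rewrite lamh_gt //.
  have h : (lam k * fr f k x <= lam k * p k)%R.
    by rewrite ler_wpM2l ?lam_ge0 ?(leq_ltn_trans (leq0n m) mk) // le_max lexx.
  have h' : (0 <= beta * p k)%R by rewrite mulr_ge0 // ltW.
  rewrite mulrDl; lra.
have h2 : (0 <= \sum_(n.+1 <= k < j) lamh k * p k)%R.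
  rewrite big_seq; apply: sumr_ge0 => k; rewrite mem_index_iota => /andP[nk _].
  by rewrite mulr_ge0 // lamh_ge0 // (leq_ltn_trans (leq0n n) nk).
have h3 : (beta * p j <= lamh j * p j)%R.
  by rewrite lamh_gt ?(leq_ltn_trans mn nj) // ler_wpM2r // lerDr lam_ge0 // (leq_ltn_trans _ nj).
rewrite -/(p j); lra.
Qed.

Lemma limsup_psum_le x (r : R) : findom f x ->
  \sum_(m.+1 <= i <oo) term x i \is a fin_num ->
  (forall n e, (0 < e)%R ->
    exists2 j, (n < j)%N & (r - e <= beta * Num.max (fr f j x) 0)%R) ->
  limn_esup (psum f lam x) <=
    (\sum_(1 <= k < m.+1) lam k * fr f k x + fine (\sum_(m.+1 <= i <oo) term x i) - r)%:E.
Proof.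
move=> dx Tfin r_freq; apply: le_trans (limn_esup_le_esups _ m) _.
apply: ge_ereal_sup => _ [n /= mn <-]; rewrite psum_EFin // lee_fin.
apply/ler_addgt0Pr => e e0; have [j nj hj] := r_freq n e e0.
have := psum_add_term_le x n j dx mn nj; rewrite -(fineK Tfin) -EFinD lee_fin.
lra.
Qed.

Lemma Lag_le_Lag_m_findom x : findom f x -> Lag f x lam linf <= Lag_m f m x lamh.
Proof.
move=> dx; set T := \sum_(m.+1 <= i <oo) term x i.
have [Ty|Tny] := eqVneq T +oo; first by rewrite /Lag_m -/T Ty !dual_adde_dE daddey leey.
have Tfin : T \is a fin_num.
  rewrite fin_numE Tny andbT gt_eqF //; apply: lt_le_trans (ltNyr 0%R) _.
  exact: le_trans (term_ge0 x _ (ltnSn m)) (term_le_series x _ (ltnSn m)).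
set A := (\sum_(1 <= k < m.+1) lam k * fr f k x)%R.
have LmE : Lag_m f m x lamh = (fr f 0 x + A + fine T)%:E.
  rewrite /Lag_m -/(psum f lamh x m) psum_EFin // -/T -(fineK Tfin).
  rewrite -(fineK (findom_fin_num f_neqNy 0 dx)) !dual_adde_dE -!dEFinD.
  congr (_ + _ + _)%R%:E; apply: eq_big_nat => k /andP[_ km].
  by rewrite lamh_le // -ltnS.
have freq0 n e : (0 < e)%R -> exists2 j, (n < j)%N & (0 - e <= beta * Num.max (fr f j x) 0)%R.
  move=> e0; exists n.+1 => //; apply: le_trans (_ : 0 <= _)%R; first lra.
  by rewrite mulr_ge0 ?le_max ?lexx ?orbT // ltW.
have sup0 := limsup_psum_le x 0%R dx Tfin freq0; rewrite -/T -/A in sup0.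
rewrite LmE /Lag -(fineK (findom_fin_num f_neqNy 0 dx)) -/(fr f 0 x).
have [l0|lpos] := eqVneq linf 0%R.
  rewrite l0 cmul0 ?lt_eqF ?(le_lt_trans (f_infty_le_tailsup 0%N x) dx.2) //.
  by apply: dual_adde_le3; apply: le_trans sup0 _; rewrite lee_fin; lra.
have lgt0 : (0 < linf)%R by rewrite lt_neqAle eq_sym lpos linf_ge0.
rewrite cmul_gt0 //; case E : (f_infty f x) => [phi| |].
- rewrite -EFinM; apply: dual_adde_le3.
  apply: le_trans (limsup_psum_le x (linf * phi)%R dx Tfin _) _ => [n e e0|]; last first.
    by rewrite lee_fin -/T -/A; lra.
  have : (phi - e / linf)%:E < tailsup f n x.
    by apply: lt_le_trans (f_infty_le_tailsup n x); rewrite E lte_fin gtrBl divr_gt0.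
  move=> /ereal_sup_gt[_ [j /= nj <-] hj]; exists j => //.
  move: hj; rewrite -(fineK (findom_fin_num f_neqNy j dx)) lte_fin -/(fr f j x) => hj.
  have : (linf * (phi - e / linf) <= linf * fr f j x)%R by rewrite ler_pM2l // ltW.
  rewrite mulrBr mulrCA divff ?mulr1 ?gt_eqF // => /le_trans; apply.
  apply: le_trans (_ : linf * Num.max (fr f j x) 0 <= _)%R.
    by rewrite ler_pM2l // le_max lexx.
  by rewrite ler_wpM2r // le_max lexx orbT.
- by move: (le_lt_trans (f_infty_le_tailsup 0%N x) dx.2); rewrite E ltxx.
rewrite gt0_muleNy ?lte_fin // !dual_adde_dE daddeNy ?leNye //.
rewrite -ltey; apply: le_lt_trans (lee_dD (lexx _) sup0) _.
by rewrite -dEFinD ltry.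
Qed.

Lemma Lag_le_Lag_m x : Lag f x lam linf <= Lag_m f m x lamh.
Proof.
have [dx|ndx] := pselect (findom f x); first exact: Lag_le_Lag_m_findom.
by rewrite Lag_m_pinfty ?leey.
Qed.

End LagrangianComparison.
Arguments Lag_le_Lag_m {R X f} f_neqNy {lam linf m}.
Arguments Lag_m_le_f0 {R X f} f_neqNy {lam m x}.

Lemma lee_from_below (R : realType) (a b : \bar R) :
  (forall r : R, (r%:E < a)%E -> (r%:E <= b)%E) -> (a <= b)%E.
Proof.
case: a => [s| |] h; case: b h => [t| |] h //; rewrite ?leey ?leNye //.
- rewrite lee_fin leNgt; apply/negP => ts.
  have h1 : (((s + t) / 2)%:E < s%:E)%E by rewrite lte_fin; lra.
  by have := h _ h1; rewrite lee_fin; lra.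
- have h1 : ((s - 1)%:E < s%:E)%E by rewrite lte_fin; lra.
  by have := h _ h1.
- by have := h (t + 1) (ltry _); rewrite lee_fin => H; exfalso; lra.
- by have := h 0 (ltry _).
Qed.

Lemma ell1_pos_bounded {R : realType} {lam : nat -> R} :
  ell1_pos lam -> exists M, forall k, (0 < k)%N -> `|lam k| <= M.
Proof.
move=> [_ lam_sum]; set S := (\sum_(1 <= k <oo) (`|lam k|)%:E)%E in lam_sum.
have S_ge0 : (0 <= S)%E by apply: nneseries_ge0 => n _ _; rewrite lee_fin.
exists (fine S) => k k0; rewrite -lee_fin fineK ?ge0_fin_numE //.
apply: le_trans (@nneseries_lim_ge R (fun j => (`|lam j|)%:E) xpredT 1 k.+1 _) => [|n _ _].
  rewrite big_nat_recr //= leeDr // big_seq; apply: sume_ge0 => j _.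
  by rewrite lee_fin.
by rewrite lee_fin.
Qed.

Lemma lam_hat_ellinf {R : realType} {lam : nat -> R} {linf : R} m :
  ell1_pos lam -> 0 <= linf -> ellinf_pos (lam_hat lam linf m).
Proof.
move=> hl linf0; have [M hM] := ell1_pos_bounded hl; have [lam_ge0 _] := hl.
split => [k k0|].
  rewrite /lam_hat; case: ifP => _; first exact: lam_ge0.
  by case: ifP => _; have := lam_ge0 k k0; lra.
exists (M + linf + 1) => k k0; have := hM k k0; have lk := lam_ge0 k k0.
rewrite ger0_norm // => lkM; rewrite /lam_hat; case: ifP => _; first by rewrite ger0_norm //; lra.
by case: ifP => _; rewrite ger0_norm; lra.
Qed.

Section Duality.
Variables (R : realType) (X : normedModType R) (f : nat -> X -> \bar R).
Hypothesis f_neqNy : forall k x, f k x != -oo%E.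
Hypothesis f_convex : forall k, convex_fun (f k).
Local Open Scope ereal_scope.

Lemma dualD_le_dualDm lam linf m : ell1_pos lam -> (0 <= linf)%R ->
  dualD_obj f lam linf <= dualDm_obj f m (lam_hat lam linf m).
Proof.
move=> [lam_ge0 _] linf0; apply: le_ereal_inf_tmp => _ [x _ <-].
apply: le_trans _ (Lag_le_Lag_m f_neqNy lam_ge0 linf0 x).
by apply: ereal_inf_lbound; exists x.
Qed.

Lemma vD_le_vDm m : vD f <= vDm f m.
Proof.
apply: ge_ereal_sup => _ [[lam linf] /= [hl linf0] <-].
apply: le_trans (dualD_le_dualDm _ _ m hl linf0) _.
by apply: ereal_sup_ubound; exists (lam_hat lam linf m) => //; exact: lam_hat_ellinf.
Qed.

Lemma vDm_le_vP m : vDm f m <= vP f.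
Proof.
apply: ge_ereal_sup => _ [lam [lam_ge0 _] <-].
apply: le_ereal_inf_tmp => _ [x /= fx0 <-].
apply: le_trans _ (Lag_m_le_f0 f_neqNy lam_ge0 fx0).
by apply: ereal_inf_lbound; exists x.
Qed.

Lemma dualD_ge_vfun (eps delta : R) (xb : X) :
  -oo < vfun f eps -> vfun f eps < +oo -> (0 < delta)%R -> f 0%N xb < +oo ->
  (forall k, (0 < k)%N -> f k xb <= (eps - delta)%:E) ->
  exists lam linf, [/\ ell1_pos lam, (0 <= linf)%R, (0 <= lam 0%N)%R &
    (fine (vfun f eps) + eps * lam 0%N)%:E <= dualD_obj f lam linf].
Proof.
move=> vNy vy d0 f0b fb; set V := fine (vfun f eps).
have vE : vfun f eps = V%:E by rewrite /V fineK // fin_numE -ltNye vNy -ltey vy.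
have V_le x : findom f x -> (forall k, (0 < k)%N -> f k x <= eps%:E) -> (V <= fr f 0 x)%R.
  move=> dx fx; have : vfun f eps <= f 0%N x by apply: ereal_inf_lbound; exists x.
  by rewrite vE -(fineK (findom_fin_num f_neqNy 0 dx)) lee_fin.
have [lam [lam_ge0 lam_psum lam_lagr]] := limit_multipliers f_neqNy f_convex V_le d0 f0b fb.
exists lam, (lam_infty lam); split => //.
- exact: ell1_pos_bounded_psum lam_ge0 lam_psum.
- exact: lam_infty_ge0 lam_psum.
- by apply: le_ereal_inf_tmp => _ [x _ <-]; exact: Lag_ge.
Qed.

Lemma cl_vfun_le_vD (x0 : X) : f 0%N x0 < +oo -> (forall k, (0 < k)%N -> f k x0 <= 0) ->
  cl_vfun f 0 <= vD f.
Proof.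
move=> f0x0 fx0; apply: ge_ereal_sup => _ [g [g_lsc g_le] <-].
apply: lee_from_below => r rg.
have [V /nbhs_ballP[e /= e0 eV] hV] := g_lsc 0%R r rg.
set eps := (e / 2)%R; have eps0 : (0 < eps)%R by rewrite divr_gt0.
have Veps : V eps.
  by apply: eV; rewrite /ball /= sub0r normrN ger0_norm ?ltW // /eps; lra.
have rv : r%:E < vfun f eps := lt_le_trans (hV _ Veps) (g_le eps).
have vy : vfun f eps < +oo.
  apply: le_lt_trans f0x0; apply: ereal_inf_lbound; exists x0 => //= k k0.
  by apply: le_trans (fx0 k k0) _; rewrite lee_fin ltW.
have fx0' k : (0 < k)%N -> f k x0 <= (eps - eps)%:E by rewrite subrr; exact: fx0.
have [lam [linf [hl linf0 lam0 hb]]] :=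
  dualD_ge_vfun _ _ _ (lt_trans (ltNyr r) rv) vy eps0 f0x0 fx0'.
apply: (@le_trans _ _ (dualD_obj f lam linf)); last by apply: ereal_sup_ubound; exists (lam, linf).
apply: le_trans hb; rewrite lee_fin.
have : (r < fine (vfun f eps))%R.
  by rewrite -lte_fin fineK // fin_numE -ltNye (lt_trans (ltNyr r) rv) -ltey vy.
by have := mulr_ge0 (ltW eps0) lam0; lra.
Qed.

Lemma slater_vP_le_dualD : slater f -> -oo < vP f -> vP f < +oo ->
  exists lam linf, [/\ ell1_pos lam, (0 <= linf)%R & vP f <= dualD_obj f lam linf].
Proof.
move=> [xs [f0xs sup_lt0]] vPNy vPy; set s := ereal_sup _ in sup_lt0.
have s_fin : s \is a fin_num.
  rewrite fin_numE -ltNye -ltey (lt_trans sup_lt0 (ltry 0%R)) andbT.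
  by apply: lt_le_trans (_ : f 1%N xs <= s); [rewrite ltNye | apply: ereal_sup_ubound; exists 1%N].
have s_lt0 : (0 < - fine s)%R by rewrite oppr_gt0 -lte_fin fineK.
have fs k : (0 < k)%N -> f k xs <= (0 - - fine s)%:E.
  by move=> k0; rewrite sub0r opprK fineK //; apply: ereal_sup_ubound; exists k.
have [lam [linf [hl linf0 _ hb]]] := dualD_ge_vfun _ _ _ vPNy vPy s_lt0 f0xs fs.
exists lam, linf; split => //; move: hb; rewrite mul0r addr0 fineK //.
by rewrite fin_numE -ltNye vPNy -ltey vPy.
Qed.

Lemma solDm_lam_hat lam linf m : vD f = vDm f m -> solD f lam linf ->
  solDm f m (lam_hat lam linf m).
Proof.
move=> vDE [hl [linf0 hd]]; have hat := lam_hat_ellinf m hl linf0.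
split => //; apply/eqP; rewrite eq_le; apply/andP; split.
  by apply: ereal_sup_ubound; exists (lam_hat lam linf m).
by rewrite -vDE -hd; exact: dualD_le_dualDm.
Qed.

End Duality.
Arguments vD_le_vDm {R X f} f_neqNy.
Arguments vDm_le_vP {R X f} f_neqNy.
Arguments cl_vfun_le_vD {R X f} f_neqNy f_convex.
Arguments slater_vP_le_dualD {R X f} f_neqNy f_convex.
Arguments solDm_lam_hat {R X f} f_neqNy {lam linf m}.

Local Open Scope ereal_scope.

Theorem theorem3p4 (R : realType) (X : completeNormedModType R)
  (f : nat -> X -> \bar R)
  (hproper : forall k, proper_fun (f k))
  (hconv : forall k, convex_fun (f k))
  (hC : exists x, f 0%N x < +oo /\ forall k, (0 < k)%N -> f k x <= 0)
  (hvP : -oo < vP f) :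
  (forall m : nat,
     cl_vfun f 0 <= vD f /\ vD f <= vDm f m /\ vDm f m <= vP f) /\
  (slater f ->
     (forall m : nat, vP f = vD f /\ vD f = vDm f m) /\
     (exists lam linf, solD f lam linf) /\
     (forall m : nat, exists lam, solDm f m lam) /\
     (forall lam linf, solD f lam linf ->
        forall m : nat, solDm f m (lam_hat lam linf m))).
Proof.
have f_neqNy k x : f k x != -oo by have [] := hproper k.
have [x0 [f0x0 fx0]] := hC.
have weak m : cl_vfun f 0 <= vD f /\ vD f <= vDm f m /\ vDm f m <= vP f.
  split; first exact: cl_vfun_le_vD f_neqNy hconv x0 f0x0 fx0.
  by split; [exact: vD_le_vDm f_neqNy m | exact: vDm_le_vP f_neqNy m].
split => // hs.
have vPy : vP f < +oo by apply: le_lt_trans f0x0; apply: ereal_inf_lbound; exists x0.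
have [lam [linf [hl linf0 vP_le]]] := slater_vP_le_dualD f_neqNy hconv hs hvP vPy.
have dD_le : dualD_obj f lam linf <= vD f by apply: ereal_sup_ubound; exists (lam, linf).
have strong m : vP f = vD f /\ vD f = vDm f m.
  have [_ [DDm DmP]] := weak m; have PD := le_trans vP_le dD_le.
  by split; apply/eqP; rewrite eq_le; [rewrite PD (le_trans DDm DmP)|rewrite DDm (le_trans DmP PD)].
have sol : solD f lam linf.
  do 2!split => //; apply/eqP; rewrite eq_le dD_le /=.
  by rewrite -(strong 0%N).1.
split => //; split; first by exists lam, linf.
split => [m|lam' linf' hsol m]; last exact (solDm_lam_hat f_neqNy (strong m).2 hsol).
by exists (lam_hat lam linf m); exact (solDm_lam_hat f_neqNy (strong m).2 sol).
Qed.
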